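(* No deterministic mechanism that is truthful without money and with verification for CAs with known $2$-minded bidders has approximation ratio strictly less than $2$. This holds even restricted to instances with $n=2$ bidders and $m=2$ goods (and no computational restriction on the mechanism).
   Context: Combinatorial auction with a set $\mathsf U$ of $m$ goods (single copy each) and $n$ bidders; bidder $i$ has a public collection $\mathcal S_i$ of $k$ nonempty subsets of $\mathsf U$ (known bidders; here $k=2$) and a private valuation $v_i:\mathcal S_i\to\mathbb R_{\ge0}$, extended by $v_i(T)=\max\{v_i(S'):S'\in\mathcal S_i,S'\subseteq T\}$ ($0$ if none). A declaration is any valuation $b_i:\mathcal S_i\to\mathbb R_{\ge0}$. A mechanism maps declarations to pairwise disjoint sets with $A_i(\mathbf b)\in\mathcal S_i\cup\{\emptyset\}$. Verification: bidder $i$ with true valuation $v_i$ facing $\mathbf b_{-i}$ may declare $b_i$ only if $b_i(A_i(b_i,\mathbf b_{-i}))\le v_i(A_i(b_i,\mathbf b_{-i}))$. Truthful without money and with verification: for all $i$, $\mathbf b_{-i}$, true $v_i$ and permitted $b_i$, $v_i(A_i(v_i,\mathbf b_{-i}))\ge v_i(A_i(b_i,\mathbf b_{-i}))$. Approximation ratio $\alpha$: on every truthful input, $\sum_i v_i(A_i)\ge\mathrm{OPT}/\alpha$, where $\mathrm{OPT}$ is the maximum welfare of a feasible allocation. *)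

From HB Require Import structures.
From mathcomp Require Import all_boot all_order all_algebra.
Set Implicit Arguments. Unset Strict Implicit. Unset Printing Implicit Defensive.
Import Order.TTheory GRing.Theory Num.Theory.
Local Open Scope ring_scope.

Section CA.
Variables (R : realFieldType) (n m k : nat).

(* Goods are 'I_m, bidders are 'I_n.  Bidder i's public collection S_i is
   given as B i : 'I_k -> {set 'I_m} (k distinct nonempty bundles).
   A valuation/declaration of bidder i is a function 'I_k -> R (its value on
   each bundle of S_i); a profile is 'I_n -> 'I_k -> R.
   An allocation gives each bidder either a bundle index (Some j, i.e. the
   set B i j in S_i) or nothing (None, i.e. the empty set). *)

Definition known_collections (B : 'I_n -> 'I_k -> {set 'I_m}) : Prop :=
  (forall i, injective (B i)) /\ (forall i j, B i j != set0).

Definition nonneg_val (v : 'I_k -> R) : Prop := forall j, 0 <= v j.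
Definition nonneg_profile (b : 'I_n -> 'I_k -> R) : Prop :=
  forall i, nonneg_val (b i).

Definition ext_val (Bi : 'I_k -> {set 'I_m}) (v : 'I_k -> R) (T : {set 'I_m}) : R :=
  \big[Num.max/0]_(j | Bi j \subset T) v j.

Definition alloc (B : 'I_n -> 'I_k -> {set 'I_m}) (a : 'I_n -> option 'I_k)
  (i : 'I_n) : {set 'I_m} :=
  if a i is Some j then B i j else set0.

Definition feasible (B : 'I_n -> 'I_k -> {set 'I_m}) (a : 'I_n -> option 'I_k) : bool :=
  [forall i, forall i', (i != i') ==> [disjoint alloc B a i & alloc B a i']].

Definition welfare (B : 'I_n -> 'I_k -> {set 'I_m}) (v : 'I_n -> 'I_k -> R)
  (a : 'I_n -> option 'I_k) : R :=
  \sum_i ext_val (B i) (v i) (alloc B a i).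

Definition OPT (B : 'I_n -> 'I_k -> {set 'I_m}) (v : 'I_n -> 'I_k -> R) : R :=
  \big[Num.max/0]_(a : {ffun 'I_n -> option 'I_k} | feasible B a) welfare B v a.

Definition upd (b : 'I_n -> 'I_k -> R) (i : 'I_n) (bi : 'I_k -> R) :
  'I_n -> 'I_k -> R := fun i' => if i' == i then bi else b i'.

Definition mechanism := ('I_n -> 'I_k -> R) -> ('I_n -> option 'I_k).

Definition valid_mechanism (B : 'I_n -> 'I_k -> {set 'I_m}) (A : mechanism) : Prop :=
  forall b, nonneg_profile b -> feasible B (A b).

(* verification: bidder i with true valuation vi facing b_{-i} may declare bi
   only if bi(A_i(bi, b_{-i})) <= vi(A_i(bi, b_{-i})) *)
Definition permitted (B : 'I_n -> 'I_k -> {set 'I_m}) (A : mechanism)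
  (i : 'I_n) (b : 'I_n -> 'I_k -> R) (vi bi : 'I_k -> R) : Prop :=
  let X := alloc B (A (upd b i bi)) i in
  ext_val (B i) bi X <= ext_val (B i) vi X.

Definition truthful_verif (B : 'I_n -> 'I_k -> {set 'I_m}) (A : mechanism) : Prop :=
  forall (i : 'I_n) (b : 'I_n -> 'I_k -> R) (vi bi : 'I_k -> R),
    nonneg_profile b -> nonneg_val vi -> nonneg_val bi ->
    permitted B A i b vi bi ->
    ext_val (B i) vi (alloc B (A (upd b i bi)) i)
      <= ext_val (B i) vi (alloc B (A (upd b i vi)) i).

Definition approx_ratio (B : 'I_n -> 'I_k -> {set 'I_m}) (A : mechanism)
  (alpha : R) : Prop :=
  forall v, nonneg_profile v -> OPT B v / alpha <= welfare B v (A v).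

End CA.

From mathcomp Require Import all_boot all_order all_algebra.
From mathcomp Require Import lra.
From Stdlib Require Import FunctionalExtensionality.
Set Implicit Arguments. Unset Strict Implicit. Unset Printing Implicit Defensive.
Import Order.TTheory GRing.Theory Num.Theory.
Local Open Scope ring_scope.

(* Both bidders are interested in exactly the two singleton bundles {g0} and
   {g1}.  Fix a truthful mechanism with ratio alpha < 2 and put c := alpha/2.
   - At the profile where both bidders value only g0 (at 1), the optimum is 1,
     so some bidder i must receive g0.
   - Let i raise its value for g1 from 0 to c.  Under-reporting is always
     permitted by verification, so truthfulness forces i to keep a bundle
     worth 1 to it, i.e. g0 again.
   - Then the other bidder, who values only g0, gets nothing of value: the
     welfare is 1 while the optimum is 1 + c > alpha, a contradiction. *)

Section Auctions.
Variables (R : realFieldType) (n m k : nat).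
Implicit Types (B : 'I_n -> 'I_k -> {set 'I_m}) (A : mechanism R n k).

Lemma welfare_le_OPT B (v : 'I_n -> 'I_k -> R) (a : {ffun 'I_n -> option 'I_k}) :
  feasible B a -> welfare B v a <= OPT B v.
Proof. exact: le_bigmax_cond. Qed.

Lemma ext_val_mono (Bi : 'I_k -> {set 'I_m}) (v w : 'I_k -> R) T :
  (forall j, v j <= w j) -> ext_val Bi v T <= ext_val Bi w T.
Proof. by move=> le_vw; apply: le_bigmax2 => j _; exact: le_vw. Qed.

Lemma upd_upd (b : 'I_n -> 'I_k -> R) i (x y : 'I_k -> R) :
  upd (upd b i x) i y = upd b i y.
Proof.
by apply: functional_extensionality => l; rewrite /upd; case: (l == i).
Qed.

Lemma upd_id (b : 'I_n -> 'I_k -> R) i : upd b i (b i) = b.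
Proof.
by apply: functional_extensionality => l; rewrite /upd; case: (l =P i) => [->|].
Qed.

(* Declaring a pointwise smaller valuation is always permitted by
   verification, hence a truthful mechanism never rewards under-reporting. *)
Lemma truthful_underreport B A i (b : 'I_n -> 'I_k -> R) (vi bi : 'I_k -> R) :
  truthful_verif B A -> nonneg_profile b -> nonneg_val vi -> nonneg_val bi ->
  (forall j, bi j <= vi j) ->
  ext_val (B i) vi (alloc B (A (upd b i bi)) i)
    <= ext_val (B i) vi (alloc B (A (upd b i vi)) i).
Proof.
move=> truthful b_ge0 vi_ge0 bi_ge0 le_bv.
by apply: truthful => //; apply: ext_val_mono.
Qed.

Lemma approx_ratioW B A alpha (v : 'I_n -> 'I_k -> R) :
  0 < alpha -> approx_ratio B A alpha -> nonneg_profile v ->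
  OPT B v <= welfare B v (A v) * alpha.
Proof. by move=> alpha_gt0 approx v_ge0; rewrite -ler_pdivrMr // approx. Qed.

End Auctions.

Section SingletonBundles.
Variables (R : realFieldType) (n m : nat).

Definition singletons : 'I_n -> 'I_m -> {set 'I_m} := fun _ g => [set g].

Definition outcome_value (v : 'I_m -> R) (o : option 'I_m) : R :=
  if o is Some g then v g else 0.

Lemma singletons_known : known_collections singletons.
Proof.
split=> [i|i g]; first exact: set1_inj.
by apply/set0Pn; exists g; rewrite set11.
Qed.

Lemma ext_val_singletons (v : 'I_m -> R) (a : 'I_n -> option 'I_m) i :
  nonneg_val v ->
  ext_val (singletons i) v (alloc singletons a i) = outcome_value v (a i).
Proof.
move=> v_ge0; rewrite /ext_val /alloc /singletons /outcome_value.
case: (a i) => [g|]; last first.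
  by rewrite big_pred0 // => h; rewrite sub1set in_set0.
apply: le_anti; rewrite bigmax_le ?v_ge0 //=; first exact: le_bigmax_cond.
by move=> h; rewrite sub1set in_set1 => /eqP ->.
Qed.

Lemma welfare_singletons (v : 'I_n -> 'I_m -> R) (a : 'I_n -> option 'I_m) :
  nonneg_profile v ->
  welfare singletons v a = \sum_i outcome_value (v i) (a i).
Proof. by move=> v_ge0; apply: eq_bigr => i _; exact: ext_val_singletons. Qed.

Lemma feasible_singletonsP (a : 'I_n -> option 'I_m) :
  feasible singletons a <->
  (forall i i' g, a i = Some g -> a i' = Some g -> i = i').
Proof.
rewrite /feasible /alloc /singletons; split.
  move=> /forallP feas i i' g ai ai'; apply/eqP/negPn/negP => ne_ii'.
  move: feas => /(_ i)/forallP/(_ i')/implyP/(_ ne_ii').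
  by rewrite ai ai' disjoints1 set11.
move=> uniq_goods.
apply/forallP => i; apply/forallP => i'; apply/implyP => ne_ii'.
case ai: (a i) => [g|]; last by rewrite -setI_eq0 set0I.
case ai': (a i') => [g'|]; last by rewrite -setI_eq0 setI0.
rewrite disjoints1 in_set1; apply: contra ne_ii' => /eqP eq_gg'.
by apply/eqP/(uniq_goods _ _ g) => //; rewrite ai' eq_gg'.
Qed.

End SingletonBundles.
Arguments singletons {n m}.

(* Two bidders and two goods g0 = ord0, g1 = ord_max. *)

Lemma ord2_cases (g : 'I_2) : g = ord0 \/ g = ord_max.
Proof. by case: g => [[|[|//]] lt_g2]; [left|right]; apply: val_inj. Qed.

Lemma sum_pair (V : nmodType) (F : 'I_2 -> V) i i' :
  i != i' -> \sum_l F l = F i + F i'.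
Proof.
have -> : \sum_l F l = F ord0 + F ord_max.
  by rewrite big_ord_recl big_ord1; congr (_ + F _); apply: val_inj.
by case: (ord2_cases i) => ->; case: (ord2_cases i') => ->;
  rewrite ?eqxx // addrC.
Qed.

Lemma ord2_other (i l l' : 'I_2) : l != i -> l' != i -> l = l'.
Proof.
by case: (ord2_cases i) => ->; case: (ord2_cases l) => ->;
  case: (ord2_cases l') => ->.
Qed.

Section TwoBidders.
Variables (R : realFieldType) (c : R).
Hypotheses (c_ge0 : 0 <= c) (c_lt1 : c < 1).

Definition only_g0 : 'I_2 -> R := fun g => if g == ord0 then 1 else 0.
Definition also_g1 : 'I_2 -> R := fun g => if g == ord0 then 1 else c.

Definition both_only_g0 : 'I_2 -> 'I_2 -> R := fun _ => only_g0.
Definition raised (i : 'I_2) : 'I_2 -> 'I_2 -> R := upd both_only_g0 i also_g1.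

Lemma only_g0_nonneg : nonneg_val only_g0.
Proof. by move=> g; rewrite /only_g0; case: ifP. Qed.

Lemma also_g1_nonneg : nonneg_val also_g1.
Proof. by move=> g; rewrite /also_g1; case: ifP. Qed.

Lemma both_only_g0_nonneg : nonneg_profile both_only_g0.
Proof. by move=> i; exact: only_g0_nonneg. Qed.

Lemma raised_nonneg i : nonneg_profile (raised i).
Proof.
move=> l; rewrite /raised /upd.
by case: (l == i); [exact: also_g1_nonneg | exact: only_g0_nonneg].
Qed.

Lemma only_g0_le_also_g1 g : only_g0 g <= also_g1 g.
Proof. by rewrite /only_g0 /also_g1; case: ifP. Qed.

Lemma outcome_only_g0 o : outcome_value only_g0 o = (o == Some ord0)%:R.
Proof. by case: o => [g|] //=; case: (ord2_cases g) => ->. Qed.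

Lemma outcome_also_g1_ge1 o : 1 <= outcome_value also_g1 o -> o = Some ord0.
Proof.
case: o => [g|] /=; last by rewrite ler10.
by case: (ord2_cases g) => -> //; rewrite /also_g1 /= leNgt c_lt1.
Qed.

Lemma raised_self i : raised i i = also_g1.
Proof. by rewrite /raised /upd eqxx. Qed.

Lemma raised_other i l : l != i -> raised i l = only_g0.
Proof. by rewrite /raised /upd => /negbTE ->. Qed.

(* The optimum at [raised i] is at least 1 + c: give g1 to bidder i and g0
   to the other bidder. *)
Lemma OPT_raised i : 1 + c <= OPT singletons (raised i).
Proof.
pose a : {ffun 'I_2 -> option 'I_2} :=
  [ffun l => if l == i then Some ord_max else Some ord0].
have feas_a : feasible singletons a.
  apply/feasible_singletonsP => l l' g; rewrite !ffunE.
  case: (l =P i) => [->|/eqP ne_li] [<-]; case: (l' =P i) => [->|/eqP ne_l'i] //.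
  by move=> _; exact: ord2_other ne_li ne_l'i.
apply: le_trans (welfare_le_OPT _ feas_a).
have ne_i'i : lift i ord0 != i by rewrite eq_sym neq_lift.
rewrite welfare_singletons; last exact: raised_nonneg.
rewrite (sum_pair _ (neq_lift i ord0)) raised_self raised_other //.
by rewrite !ffunE eqxx (negbTE ne_i'i) /= /also_g1 /only_g0 /= addrC.
Qed.

Variable A : mechanism R 2 2.
Hypotheses (valid : valid_mechanism singletons A)
           (truthful : truthful_verif singletons A).

Lemma winner_at_both_only_g0 alpha :
  0 < alpha -> approx_ratio singletons A alpha ->
  exists i, A both_only_g0 i = Some ord0.
Proof.
move=> alpha_gt0 approx.
have [/existsP[i /eqP win]|no_winner] :=
  boolP [exists i, A both_only_g0 i == Some ord0]; first by exists i.
have welfare0 : welfare singletons both_only_g0 (A both_only_g0) = 0.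
  rewrite welfare_singletons; last exact: both_only_g0_nonneg.
  apply: big1 => i _; rewrite outcome_only_g0.
  by move: no_winner; rewrite negb_exists => /forallP/(_ i)/negbTE ->.
pose a : {ffun 'I_2 -> option 'I_2} :=
  [ffun l => if l == ord0 then Some ord0 else None].
have feas_a : feasible singletons a.
  apply/feasible_singletonsP => l l' g; rewrite !ffunE.
  by case: (l =P ord0) => [->|//] _; case: (l' =P ord0).
have OPT_ge1 : 1 <= OPT singletons both_only_g0.
  apply: le_trans (welfare_le_OPT _ feas_a).
  rewrite welfare_singletons; last exact: both_only_g0_nonneg.
  have ne01 : ord0 != ord_max :> 'I_2 by [].
  by rewrite (sum_pair _ ne01) !ffunE /= addr0 /only_g0.
have := approx_ratioW alpha_gt0 approx both_only_g0_nonneg.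
by rewrite welfare0 mul0r; lra.
Qed.

(* Monotonicity: a winner of g0 still wins g0 after raising its value for g1,
   since reporting the old (smaller) valuation is permitted. *)
Lemma raised_keeps_g0 i :
  A both_only_g0 i = Some ord0 -> A (raised i) i = Some ord0.
Proof.
move=> win.
have := truthful_underreport i truthful (raised_nonneg i) also_g1_nonneg
  only_g0_nonneg only_g0_le_also_g1.
have -> : upd (raised i) i only_g0 = both_only_g0.
  by rewrite /raised upd_upd; exact: upd_id.
rewrite /raised upd_upd -/(raised i) !(ext_val_singletons _ _ also_g1_nonneg) win.
exact: outcome_also_g1_ge1.
Qed.

Lemma welfare_raised i :
  A (raised i) i = Some ord0 -> welfare singletons (raised i) (A (raised i)) = 1.
Proof.
move=> keep.
rewrite welfare_singletons; last exact: raised_nonneg.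
have ne_i'i : lift i ord0 != i by rewrite eq_sym neq_lift.
rewrite (sum_pair _ (neq_lift i ord0)) raised_self raised_other // keep.
have /feasible_singletonsP uniq_goods := valid (raised_nonneg i).
rewrite outcome_only_g0; case: eqP => [lost|_].
  by move: ne_i'i; rewrite -(uniq_goods _ _ _ keep lost) eqxx.
by rewrite /= /also_g1 /= addr0.
Qed.

End TwoBidders.

Theorem theorem11 :
  forall R : realFieldType,
  exists B : 'I_2 -> 'I_2 -> {set 'I_2},
    known_collections B /\
    forall A : mechanism R 2 2,
      valid_mechanism B A -> truthful_verif B A ->
      forall alpha : R, 0 < alpha -> alpha < 2 -> ~ approx_ratio B A alpha.
Proof.
move=> R; exists singletons; split; first exact: singletons_known.
move=> A valid truthful alpha alpha_gt0 alpha_lt2 approx.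
pose c := alpha / 2.
have c_ge0 : 0 <= c by rewrite /c; lra.
have c_lt1 : c < 1 by rewrite /c; lra.
have [i win] := winner_at_both_only_g0 alpha_gt0 approx.
have keep := raised_keeps_g0 c_ge0 c_lt1 truthful win.
have := approx_ratioW alpha_gt0 approx (raised_nonneg c_ge0 i).
rewrite (welfare_raised c_ge0 valid keep) mul1r => OPT_le_alpha.
have := OPT_raised c_ge0 i; rewrite /c; lra.
Qed.
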